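(* Let $T$ be a rhombic alternative tableau of type $X\in B_n^r$ with tiling $\mathcal{T}$, and run the label-passing algorithm on $T$. Suppose that a label $J$ is passed along the line of a north-strip $\mathbf{n}$ southward out of a tile $\mathbf{t}$ of $\mathbf{n}$, and that no tile of $\mathbf{n}$ below $\mathbf{t}$ contains an $\alpha$. Then at the completion of the algorithm, the southeast boundary edge (external vertex) of $\mathbf{n}$ carries the label $\{J_{\max}\}$, where $J_{\max}=\max J$.
   Context: Words and diagrams. For $0\le r\le n$ let $B_n^r$ be the set of words $X\in\{H,L,0\}^n$ with exactly $r$ letters $L$. If $X$ has $k$ letters $H$, $r$ letters $L$ and $\ell$ letters $0$, its rhombic diagram $\Gamma(X)$ is the closed region bounded by two paths of unit steps, using the directions west (horizontal), south (vertical) and southwest (diagonal: a fixed unit vector strictly between west and south), both going from a point $P$ to a point $Q$: the northwest boundary consists of $\ell$ west steps, then $r$ southwest steps, then $k$ south steps; the southeast boundary is obtained by reading $X$ left to right and taking a west step for each $0$, a southwest step for each $L$, a south step for each $H$. A tiling of $\Gamma(X)$ is a tiling by unit rhombi of three kinds: squares (horizontal and vertical edges), tall rhombi (vertical and diagonal edges), short rhombi (horizontal and diagonal edges). A west-strip (resp. north-strip, northwest-strip) is a maximal set of tiles connected through shared vertical (resp. horizontal, diagonal) edges; each runs from an edge of the southeast boundary to an edge of the northwest boundary. Rhombic alternative tableaux. A rhombic alternative tableau (RAT) of type $X$ with tiling $\mathcal{T}$ is a filling of the tiles of $\mathcal{T}$, each tile empty or containing one of $\alpha,\beta,q$, where $\alpha$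 occurs only in squares and short rhombi and $\beta$ only in squares and tall rhombi, such that: (i) every tile in the same west-strip as a tile containing $\beta$ and to its left is empty; (ii) every tile in the same north-strip as a tile containing $\alpha$ and above it is empty; (iii) every tile not forced to be empty by (i),(ii) contains $\alpha$, $\beta$ or $q$. Label-passing algorithm. A label is a finite set of consecutive integers; for labels $C,D$ write $D\succ C$ if both are nonempty and $\min D=\max C+1$. Given a RAT $T$: through each west-strip draw a line through the midpoints of its vertical edges, through each north-strip a line through midpoints of its horizontal edges, and through each northwest-strip a line through midpoints of its diagonal edges (all passing through the tile centres). For every tile containing $\alpha$ erase the part of its north-strip line above the tile's centre; for every tile containing $\beta$ erase the part of its west-strip line to the left of the tile's centre. This yields a forest of binary trees whose branching vertices are the centres of tiles containing $\alpha$ or $\beta$, whose leaves (external vertices) are the southeast boundary edges and whose roots are northwest boundary edges; roots are red/green/blue according as they lie on a west-/northwest-/north-strip. Add a special trivial green root at $Q$ with one fictitious leaf. Order the roots: red roots from top to bottom, then green roots (starting with the special one) from southwest to northeast, then blue roots from left to right. Label the roots so that each root label has as many elements as its tree has leaves (one for the special root), each root's label is $\succ$ the label of the preceding root, and the union of all root labels is $\{1,\dots,n+1\}$. Labels are then passed from the roots towards the leaves (southeastward) along branches, unchanged along branches; when a label $B$ reaches a branching vertex $v$ it is split as $B=C\cup D$ with $D\succ C$, each of the two outgoing branches getting a label of size equal to its number of leaves, according to: (I) if $v$ lies in a rhombus (tall or short), $D$ goes to the outgoing branch along the northwest-strip; (II) if $v$ lies in a square containing $\alpha$, $D$ goes to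 the branch leaving eastward and $C$ to the branch leaving southward; (III) if $v$ lies in a square containing $\beta$, $D$ goes to the branch leaving southward and $C$ to the branch leaving eastward. At completion every southeast boundary edge carries a singleton label. *)

From HB Require Import structures.
From mathcomp Require Import all_boot.

Set Implicit Arguments.
Unset Strict Implicit.
Unset Printing Implicit Defensive.

Inductive letter := LH | LL | L0.

(* Order of the letters on the northwest boundary: 0 < L < H. *)
Definition rank (x : letter) : nat :=
  match x with L0 => 0 | LL => 1 | LH => 2 end.
Definition of_rank (n : nat) : letter :=
  match n with 0 => L0 | 1 => LL | _ => LH end.
Lemma rankK : cancel rank of_rank. Proof. by case. Qed.
HB.instance Definition _ := Equality.copy letter (can_type rankK).

Inductive sym := Alpha | Beta | Qsym.

Definition swap_at (w : seq nat) (p : nat) : seq nat :=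
  take p w ++ [:: nth 0 w p.+1; nth 0 w p] ++ drop p.+2 w.

Section Rhombic.
Variable X : seq letter.
Variable s : seq nat.         (* the tiling, as a sequence of tile additions *)
Variable F : nat -> option sym. (* the filling: None = empty tile *)

(* strips are identified with the positions 0..n-1 of the letters of X
   (= southeast boundary edges); strip i is a west-strip / northwest-strip /
   north-strip according as X_i is H / L / 0. *)
Definition letterOf (i : nat) : letter := nth L0 X i.

(* the boundary path after the first k tiles have been added *)
Fixpoint word_at (k : nat) : seq nat :=
  match k with
  | 0 => iota 0 (size X)
  | k'.+1 => swap_at (word_at k') (nth 0 s k')
  end.

(* the two strips crossing at tile t *)
Definition upper (t : nat) : nat := nth 0 (word_at t) (nth 0 s t).
Definition lower (t : nat) : nat := nth 0 (word_at t) (nth 0 s t).+1.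
Definition in_tile (t i : nat) : bool := (i == upper t) || (i == lower t).

Definition valid_step (t : nat) : bool :=
  ((nth 0 s t).+1 < size X) && (rank (letterOf (lower t)) < rank (letterOf (upper t))).

(* s encodes a tiling of Gamma(X): every step adds a unit rhombus on the
   current path, and the final path is the northwest boundary 0^l L^r H^k. *)
Definition is_tiling : Prop :=
  (forall t, t < size s -> valid_step t) /\
  sorted (fun i j => rank (letterOf i) <= rank (letterOf j)) (word_at (size s)).

Definition forced_empty (t : nat) : Prop :=
  exists t0, t0 < t /\
    ((F t0 = Some Beta /\ in_tile t (upper t0)) \/
     (F t0 = Some Alpha /\ in_tile t (lower t0))).

Definition is_RAT : Prop :=
  [/\ (* alpha only in squares and short rhombi *)
      (forall t, t < size s -> F t = Some Alpha -> letterOf (lower t) = L0),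
      (* beta only in squares and tall rhombi *)
      (forall t, t < size s -> F t = Some Beta -> letterOf (upper t) = LH),
      (forall t t', t < t' -> t' < size s -> F t = Some Beta ->
          in_tile t' (upper t) -> F t' = None),
      (forall t t', t < t' -> t' < size s -> F t = Some Alpha ->
          in_tile t' (lower t) -> F t' = None) &
      (forall t, t < size s -> ~ forced_empty t -> F t <> None)].

(* branching vertex at tile t: (strip whose line ends at t, continuing strip) *)
Definition vert (t : nat) : option (nat * nat) :=
  match F t with
  | Some Alpha => Some (lower t, upper t)
  | Some Beta => Some (upper t, lower t)
  | _ => None
  end.

(* number of leaves of the branch of each strip just northwest of the path
   word_at k (None = line erased) *)
Fixpoint cnt_at (k : nat) : nat -> option nat :=
  match k with
  | 0 => fun _ => Some 1
  | k'.+1 =>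
      let c := cnt_at k' in
      match vert k' with
      | Some (a, b) => fun i =>
          if i == a then None
          else if i == b then
            (match c a, c b with Some x, Some y => Some (x + y) | _, _ => None end)
          else c i
      | None => c
      end
  end.

Definition final_cnt := cnt_at (size s).
Definition final_word := word_at (size s).

(* roots in order: red top to bottom, special green root (None), green
   southwest to northeast, blue left to right; only surviving lines. *)
Definition root_order : seq (option nat) :=
  [seq o <- [seq Some i | i <- final_word & letterOf i == LH] ++
            None :: [seq Some i | i <- rev final_word & letterOf i == LL] ++
                    [seq Some i | i <- rev final_word & letterOf i == L0]
     | if o is Some i then final_cnt i != None else true].

Definition root_size (o : option nat) : nat :=
  match o with None => 1 | Some i => odflt 0 (final_cnt i) end.

Definition root_lab (i : nat) : option (seq nat) :=
  if Some i \in root_order then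
    let k := index (Some i) root_order in
    Some (iota (1 + sumn [seq root_size o | o <- take k root_order])
               (root_size (Some i)))
  else None.

(* one step of label passing, through tile t (northwest to southeast) *)
Definition pass (t : nat) (lab : nat -> option (seq nat)) : nat -> option (seq nat) :=
  match vert t with
  | Some (a, b) =>
      let B := odflt [::] (lab b) in
      let c := odflt 0 (cnt_at t a) in
      fun i => if i == a then Some (take c B)
               else if i == b then Some (drop c B)
               else lab i
  | None => lab
  end.

Fixpoint back (d : nat) : nat -> option (seq nat) :=
  match d with
  | 0 => root_lab
  | d'.+1 => pass (size s - d'.+1) (back d')
  end.

(* labels carried by the strip lines on the path word_at k (just southeast of
   tiles k, k+1, ...);  lab_at 0 = labels of the southeast boundary edges. *)
Definition lab_at (k : nat) : nat -> option (seq nat) := back (size s - k).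

End Rhombic.

(* Along the line of every strip, the label held just southeast of a tile is an
   interval whose length is the number of leaves of its branch: root labels are
   intervals, and a split hands each branch a prefix or a suffix of the parent
   interval.  A north-strip line that meets no alpha further south is never the
   branch that ends at a vertex (an alpha ends the north-strip through it, a
   beta ends a west-strip), so all the way down to the boundary it keeps
   receiving suffixes of [J].  Its final label is therefore a one-element
   suffix of the interval [J], namely [J_max]. *)
From mathcomp Require Import all_boot zify.
Set Implicit Arguments.
Unset Strict Implicit.

Lemma swap_at_perm (w : seq nat) p : p.+1 < size w -> perm_eq (swap_at w p) w.
Proof.
move=> lt_p; rewrite /swap_at.
have drop_p : drop p w = nth 0 w p :: nth 0 w p.+1 :: drop p.+2 w.
  by rewrite (drop_nth 0 (ltnW lt_p)) (drop_nth 0 lt_p).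
rewrite -[X in perm_eq _ X](cat_take_drop p w) drop_p perm_cat2l.
by apply/permP => q /=; rewrite addnCA.
Qed.

Lemma bigmax_iota_drop c y m z :
  drop c (iota y m) = [:: z] -> \max_(j <- iota y m) j = z.
Proof.
rewrite drop_iota => drop1; have m_eq : m = c.+1.
  by have := congr1 size drop1; rewrite size_iota /=; lia.
move: drop1; rewrite m_eq subSnn => -[<-] {m m_eq}.
elim: c y => [|c IH] y; first by rewrite big_seq1 addn0.
by rewrite [iota _ _]/= big_cons IH; lia.
Qed.

Section LabelPassing.

Variables (X : seq letter) (s : seq nat) (F : nat -> option sym).
Hypothesis tilingXs : is_tiling X s.
Hypothesis ratF : is_RAT X s F.

Lemma word_at_perm k : k <= size s -> perm_eq (word_at X s k) (iota 0 (size X)).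
Proof.
elim: k => [|k IH] lt_k //=; have /andP [lt_p _] := tilingXs.1 k lt_k.
have word_k := IH (ltnW lt_k).
by apply/(perm_trans _ word_k)/swap_at_perm; rewrite (perm_size word_k) size_iota.
Qed.

Lemma in_tile_lt k i : k < size s -> in_tile X s k i -> i < size X.
Proof.
move=> lt_k i_k; have word_k := word_at_perm (ltnW lt_k).
have /andP [lt_p _] := tilingXs.1 k lt_k.
have size_k : size (word_at X s k) = size X by rewrite (perm_size word_k) size_iota.
suff : i \in word_at X s k by rewrite (perm_mem word_k) mem_iota.
by case/orP: i_k => /eqP ->; rewrite mem_nth // size_k // ltnW.
Qed.

Lemma lower_neq_upper k : k < size s -> lower X s k != upper X s k.
Proof.
move=> lt_k; have /andP [_] := tilingXs.1 k lt_k.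
by apply: contraTneq => ->; rewrite ltnn.
Qed.

Lemma vert_Some k a b : vert X s F k = Some (a, b) ->
  (F k = Some Alpha /\ a = lower X s k /\ b = upper X s k) \/
  (F k = Some Beta /\ a = upper X s k /\ b = lower X s k).
Proof. by rewrite /vert; case: (F k) => [[]|] // [<- <-]; [left|right]. Qed.

Lemma vert_in_tile k a b : vert X s F k = Some (a, b) ->
  [/\ F k <> None, in_tile X s k a & in_tile X s k b].
Proof. by case/vert_Some => -[-> [-> ->]]; rewrite /in_tile !eqxx ?orbT. Qed.

Lemma ended_strip_empty t0 k i b : t0 < k -> k < size s ->
  vert X s F t0 = Some (i, b) -> in_tile X s k i -> F k = None.
Proof.
case: ratF => _ _ beta_empty alpha_empty _ lt_t0 lt_k.
by case/vert_Some => -[F_t0 [-> _]]; [apply: alpha_empty | apply: beta_empty].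
Qed.

Lemma cnt_at_None k i : k <= size s -> cnt_at X s F k i = None ->
  exists t0 b, t0 < k /\ vert X s F t0 = Some (i, b).
Proof.
elim: k i => [|k IH] i // lt_k /=.
have earlier j : cnt_at X s F k j = None ->
    exists t0 b, t0 < k.+1 /\ vert X s F t0 = Some (j, b).
  by case/(IH j (ltnW lt_k)) => t0 [b [lt_t0 v_t0]]; exists t0, b; split; first exact: ltnW.
case v_k: (vert X s F k) => [[a b]|]; last exact: earlier.
case: eqP => [->|_]; first by exists k, b.
case: eqP => [-> | _]; last exact: earlier.
have [F_k a_k b_k] := vert_in_tile v_k.
have live j : in_tile X s k j -> cnt_at X s F k j <> None.
  move=> j_k /(IH j (ltnW lt_k)) [t0 [b0 [lt_t0 v_t0]]].
  exact/F_k/(ended_strip_empty lt_t0 lt_k v_t0).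
case c_a: (cnt_at X s F k a) => [?|]; last by case: (live a a_k).
by case c_b: (cnt_at X s F k b) => [?|] //; case: (live b b_k).
Qed.

Lemma cnt_at_tile k i : k < size s -> F k <> None -> in_tile X s k i ->
  cnt_at X s F k i <> None.
Proof.
move=> lt_k F_k i_k /(cnt_at_None (ltnW lt_k)) [t0 [b [lt_t0 v_t0]]].
exact/F_k/(ended_strip_empty lt_t0 lt_k v_t0).
Qed.

Lemma root_order_mem i : i < size X -> final_cnt X s F i != None ->
  Some i \in root_order X s F.
Proof.
move=> lt_i live_i; have word := word_at_perm (leqnn (size s)).
have i_final : i \in final_word X s by rewrite /final_word (perm_mem word) mem_iota.
rewrite /root_order mem_filter live_i /= mem_cat inE /= mem_cat !(mem_map Some_inj).
by rewrite !mem_filter !mem_rev i_final; case: (letterOf X i); rewrite ?orbT.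
Qed.

Lemma lab_at_pass k : k < size s ->
  lab_at X s F k = pass X s F k (lab_at X s F k.+1).
Proof.
by move=> lt_k; rewrite /lab_at (_ : size s - k = (size s - k.+1).+1) /=; [congr pass|]; lia.
Qed.

Definition interval_labels k : Prop := forall i m, i < size X ->
  cnt_at X s F k i = Some m -> exists x, lab_at X s F k i = Some (iota x m).

Lemma interval_labels_roots : interval_labels (size s).
Proof.
move=> i m lt_i c_i; have live_i : final_cnt X s F i != None by rewrite /final_cnt c_i.
rewrite /lab_at subnn /= /root_lab root_order_mem //= /root_size /final_cnt c_i.
by eexists.
Qed.

Lemma interval_labels_pass k : k < size s ->
  interval_labels k.+1 -> interval_labels k.
Proof.
move=> lt_k IH i m lt_i; rewrite lab_at_pass // /pass.
case v_k: (vert X s F k) => [[a b]|].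
  2: by move=> c_i; apply: IH => //=; rewrite v_k.
have [F_k a_k b_k] := vert_in_tile v_k.
case c_a: (cnt_at X s F k a) => [ma|]; last by case: (cnt_at_tile lt_k F_k a_k).
case c_b: (cnt_at X s F k b) => [mb|]; last by case: (cnt_at_tile lt_k F_k b_k).
have b_neq_a : b != a.
  by case/vert_Some: v_k => -[_ [-> ->]]; rewrite ?(eq_sym (upper X s k)) lower_neq_upper.
have [x lab_b] : exists x, lab_at X s F k.+1 b = Some (iota x (ma + mb)).
  by apply: IH (in_tile_lt lt_k b_k) _; rewrite /= v_k (negbTE b_neq_a) eqxx c_a c_b.
case: eqP => [-> | i_neq_a].
  by rewrite c_a => -[<-]; exists x; rewrite lab_b iotaD take_size_cat ?size_iota.
case: eqP => [-> | i_neq_b].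
  by rewrite c_b => -[<-]; exists (x + ma); rewrite lab_b iotaD drop_size_cat ?size_iota.
by move=> c_i; apply: IH => //=; rewrite v_k; do 2 case: eqP => // _.
Qed.

Lemma interval_labels_at k : k <= size s -> interval_labels k.
Proof.
move=> le_k; rewrite -(subKn le_k).
elim: (size s - k) (leq_subr k (size s)) => [_ | d IH le_d].
  by rewrite subn0; exact: interval_labels_roots.
by apply: interval_labels_pass; [lia | rewrite -subSn // subSS; apply: IH; exact: ltnW].
Qed.

Lemma lab_at_pass_suffix k a J : k < size s ->
  (forall b, vert X s F k <> Some (a, b)) ->
  lab_at X s F k.+1 a = Some J -> exists c, lab_at X s F k a = Some (drop c J).
Proof.
move=> lt_k live_a lab_a; rewrite lab_at_pass // /pass.
case v_k: (vert X s F k) => [[a' b]|]; last by exists 0; rewrite drop0.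
case: eqP => [a_ended | _]; first by case: (live_a b); rewrite v_k a_ended.
by case: eqP => [<- | _]; [eexists; rewrite lab_a | exists 0; rewrite drop0].
Qed.

Lemma lab_at0_suffix t a J : t <= size s ->
  (forall k b, k < t -> vert X s F k <> Some (a, b)) ->
  lab_at X s F t a = Some J -> exists c, lab_at X s F 0 a = Some (drop c J).
Proof.
elim: t J => [|t IH] J le_t live_a lab_a; first by exists 0; rewrite drop0.
have [c lab_t] := lab_at_pass_suffix le_t (live_a t ^~ (ltnSn t)) lab_a.
have [c' lab_0] := IH _ (ltnW le_t) (fun k b lt_k => live_a k b (ltnW lt_k)) lab_t.
by exists (c' + c); rewrite lab_0 drop_drop.
Qed.

Lemma north_strip_live t a : t <= size s -> letterOf X a = L0 ->
  (forall k, k < t -> in_tile X s k a -> F k <> Some Alpha) ->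
  forall k b, k < t -> vert X s F k <> Some (a, b).
Proof.
move=> le_t a_north no_alpha k b lt_k v_k; have [_ a_k _] := vert_in_tile v_k.
case/vert_Some: v_k => -[F_k [a_end _]]; first exact: (no_alpha k lt_k a_k).
by case: ratF => _ /(_ k (leq_trans lt_k le_t) F_k); rewrite -a_end a_north.
Qed.

End LabelPassing.

Theorem lemma3p8 (n r : nat) (X : seq letter) (s : seq nat)
  (F : nat -> option sym) (t a : nat) (J : seq nat) :
  size X = n -> count_mem LL X = r ->
  is_tiling X s -> is_RAT X s F ->
  t < size s -> in_tile X s t a -> letterOf X a = L0 ->
  lab_at X s F t a = Some J ->
  (forall t', t' < t -> in_tile X s t' a -> F t' <> Some Alpha) ->
  lab_at X s F 0 a = Some [:: \max_(j <- J) j].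
Proof.
move=> _ _ tiling rat lt_t a_t a_north lab_t no_alpha.
have lt_a := in_tile_lt tiling lt_t a_t.
have live_a := north_strip_live rat (ltnW lt_t) a_north no_alpha.
have [m cnt_t] : exists m, cnt_at X s F t a = Some m.
  case c_t: (cnt_at X s F t a) => [m|]; first by exists m.
  by have [t0 [b [lt_t0 /(live_a _ _ lt_t0)]]] := cnt_at_None rat (ltnW lt_t) c_t.
have [y] := interval_labels_at tiling rat (ltnW lt_t) lt_a cnt_t.
rewrite lab_t => -[J_iota].
have [c lab_0] := lab_at0_suffix (ltnW lt_t) live_a lab_t.
have [z] := interval_labels_at tiling rat (leq0n _) lt_a (erefl (Some 1)).
rewrite lab_0 J_iota => -[drop_J].
by rewrite drop_J (bigmax_iota_drop drop_J).
Qed.
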